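(* Let $\tau$ be any legal execution of $\Pi$, starting from $C_0$, which contains exactly two transactions: - client $c_w$ invokes the write-only transaction $T_w=(w(X_0)x_0,w(X_1)x_1)$; - a client $c_r\neq c_w$ invokes the read-only transaction $T_r=(r(X_0)*,r(X_1)* )$, which completes in $\tau$. Let $v_0,v_1$ be the values that $c_r$ returns for $X_0$ and $X_1$. Then either ($v_0=x_0$ and $v_1=x_1$) or ($v_0=x_0^{in}$ and $v_1=x_1^{in}$).
   Context: System model. The system is asynchronous and message-passing, with clients and servers connected by reliable links. Events are computation steps (a process reads all its incoming messages, computes, and sends at most one message to each other process) and message deliveries, scheduled by an adversary. An execution is legal from $C$ if every step follows the state machines and every sent message is eventually received. Clients communicate only with servers, and servers send to a client only responses to its requests. A transaction $T=(R_T,W_T)$ is static. Here $r(X)*$ denotes a read of $X$ with unspecified result, and $w(X)x$ a write of value $x$ to $X$. Standing assumption. There are two servers, $p_0$ storing object $X_0$ and $p_1$ storing object $X_1$. $\Pi$ is an implementation that is causally consistent (in the standard transactional sense: for each client there is a sequential execution equivalent to the committed history that respects a causal order and in which that client's transactions read legally). $\Pi$ supports multi-object write transactions and fast read-only transactions: - a read-only transaction's client sends all its requests in one step; - each server answers in at most one step; - each server-to-client message contains only one written value, of an object stored at that server. $\Pi$ also guarantees minimal progress for write-only transactions: a write-only transaction executing solo from a reachable quiescent configuration eventually makes its values visible. Configurations. Every execution starts with $T_0^{in}=(w(X_0)x_0^{in})$ by client $c_0^{in}$ and $T_1^{in}=(w(X_1)x_1^{in})$ by client $c_1^{in}$. $Q_0$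 is a reachable configuration in which $x_0^{in}$ and $x_1^{in}$ are visible. From $Q_0$, a client $c_w\notin\{c_0^{in},c_1^{in}\}$ executes the read-only transaction $T_r^{in}=(r(X_0)*,r(X_1)* )$, which returns $(x_0^{in},x_1^{in})$. $C_0$ is the configuration in which $T_r^{in}$ has completed and no message is in transit. Visibility. A value $x$ written to $X$ is visible in a reachable configuration $C$ (quiescent, or with only a write-only transaction by $c_w$ writing $x$ active) if every legal execution from $C$ containing just one read-only transaction reading $X$, by a client not in $\{c_w,c_0^{in},c_1^{in}\}$, returns $x$ for $X$. *)

(* An abstract model of an asynchronous message-passing
   key-value store with two servers p_0 (storing X_0) and p_1 (storing X_1)
   and clients identified by natural numbers.  Objects are encoded as bool:
   false = X_0, true = X_1. *)
From Stdlib Require Import List Arith Permutation.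
Import ListNotations.
Set Implicit Arguments.

Inductive proc : Type := Srv (o : bool) | Cli (c : nat).

Definition proc_eq_dec (p q : proc) : {p = q} + {p <> q}.
Proof. decide equality; [apply Bool.bool_dec | apply Nat.eq_dec]. Defined.

(* A static transaction T = (R_T, W_T) over the two objects:
   rd0/rd1 = does T read X_0/X_1;  wr0/wr1 = value written to X_0/X_1, if any. *)
Record txn (V : Type) : Type := Txn
  { rd0 : bool; rd1 : bool; wr0 : option V; wr1 : option V }.
Arguments Txn {V}.

Definition rdo V (T : txn V) (o : bool) : bool := if o then rd1 T else rd0 T.
Definition wro V (T : txn V) (o : bool) : option V := if o then wr1 T else wr0 T.
Definition read_only V (T : txn V) : Prop := wr0 T = None /\ wr1 T = None.
Definition write_only V (T : txn V) : Prop := rd0 T = false /\ rd1 T = false.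

Definition Trd {V : Type} : txn V := Txn true true None None.
Definition Tw {V : Type} (x0 x1 : V) : txn V := Txn false false (Some x0) (Some x1).
Definition Tw0 {V : Type} (x : V) : txn V := Txn false false (Some x) None.
Definition Tw1 {V : Type} (x : V) : txn V := Txn false false None (Some x).

Definition resp (V : Type) : Type := (option V * option V)%type.
Definition resp_at V (r : resp V) (o : bool) : option V := if o then snd r else fst r.

Record impl (V : Type) : Type := Impl {
  Msg : Type;
  St : Type;
  init_st : proc -> St;
  invoke : St -> txn V -> St;
  (* a computation step: from the local state and all incoming messages,
     compute the new state, the messages sent (destination, message), and
     possibly a response to the pending transaction (meaningful for clients) *)
  stp : proc -> St -> list (proc * Msg) -> St * list (proc * Msg) * option (resp V);
  (* the written value carried by a message, if any (used to state the
     one-version property of server-to-client messages) *)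
  mval : Msg -> option V }.

Record config V (I : impl V) : Type := Config {
  st : proc -> St I;
  transit : list (proc * proc * Msg I);      (* (source, destination, msg) *)
  inbox : proc -> list (proc * Msg I);       (* delivered, not yet read *)
  pend : nat -> option (txn V) }.
Arguments Config {V I}.

Inductive ev V (I : impl V) : Type :=
| EStep (p : proc) (rcv : list (proc * Msg I)) (sends : list (proc * Msg I))
        (out : option (resp V))
| EDeliv (src dst : proc) (m : Msg I)
| EInv (c : nat) (T : txn V).
Arguments EStep {V I}.
Arguments EDeliv {V I}.
Arguments EInv {V I}.

Definition upd {A : Type} (f : proc -> A) (p : proc) (a : A) : proc -> A :=
  fun q => if proc_eq_dec q p then a else f q.
Definition updn {A : Type} (f : nat -> A) (c : nat) (a : A) : nat -> A :=
  fun d => if Nat.eq_dec d c then a else f d.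

Definition eff_out V (I : impl V) (C : config I) (p : proc) (out : option (resp V))
  : option (resp V) :=
  match p with
  | Cli c => match pend C c with Some _ => out | None => None end
  | Srv _ => None
  end.

Definition new_pend V (I : impl V) (C : config I) (p : proc) (out : option (resp V))
  : nat -> option (txn V) :=
  match p, eff_out C p out with
  | Cli c, Some _ => updn (pend C) c None
  | _, _ => pend C
  end.

Inductive estep V (I : impl V) : config I -> ev I -> config I -> Prop :=
| ES_step (C : config I) p s' sends out :
    stp I p (st C p) (inbox C p) = (s', sends, out) ->
    estep C (EStep p (inbox C p) sends (eff_out C p out))
      (Config (upd (st C) p s')
              (transit C ++ map (fun qm => (p, fst qm, snd qm)) sends)
              (upd (inbox C) p [])
              (new_pend C p out))
| ES_deliv (C : config I) pre post src dst m :
    transit C = pre ++ (src, dst, m) :: post ->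
    estep C (EDeliv src dst m)
      (Config (st C) (pre ++ post) (upd (inbox C) dst (inbox C dst ++ [(src, m)]))
              (pend C))
| ES_inv (C : config I) c T :
    pend C c = None ->
    estep C (EInv c T)
      (Config (upd (st C) (Cli c) (invoke I (st C (Cli c)) T)) (transit C) (inbox C)
              (updn (pend C) c (Some T))).

Inductive exec V (I : impl V) : config I -> list (ev I) -> config I -> Prop :=
| X_nil (C : config I) : exec C [] C
| X_cons (C C1 C2 : config I) e E : estep C e C1 -> exec C1 E C2 -> exec C (e :: E) C2.

Definition init_config V (I : impl V) : config I :=
  Config (init_st I) [] (fun _ => []) (fun _ => None).

Definition quiescent V (I : impl V) (C : config I) : Prop :=
  transit C = [] /\ forall c, pend C c = None.

Fixpoint inv_list V (I : impl V) (E : list (ev I)) : list (nat * txn V) :=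
  match E with
  | [] => []
  | EInv c T :: E' => (c, T) :: inv_list E'
  | _ :: E' => inv_list E'
  end.

Definition is_resp_of V (I : impl V) (c : nat) (e : ev I) : option (resp V) :=
  match e with
  | EStep (Cli d) _ _ (Some r) => if Nat.eq_dec d c then Some r else None
  | _ => None
  end.

Definition no_resp_between V (I : impl V) (E : list (ev I)) (c i k : nat) : Prop :=
  forall k', i < k' < k ->
    match nth_error E k' with Some e => is_resp_of c e = None | None => True end.

Definition completes_at V (I : impl V) (E : list (ev I)) (i j : nat) (r : resp V) : Prop :=
  exists c T, nth_error E i = Some (EInv c T) /\ i < j /\
    match nth_error E j with Some e => is_resp_of c e = Some r | None => False end /\
    no_resp_between E c i j.

Definition completes V (I : impl V) (E : list (ev I)) (i : nat) (r : resp V) : Prop :=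
  exists j, completes_at E i j r.

Definition in_window V (I : impl V) (E : list (ev I)) (c i k : nat) : Prop :=
  i < k /\ no_resp_between E c i k.

Definition writes V (I : impl V) (E : list (ev I)) (j : nat) (o : bool) (v : V) : Prop :=
  exists c T, nth_error E j = Some (EInv c T) /\ wro T o = Some v.
Definition writes_obj V (I : impl V) (E : list (ev I)) (j : nat) (o : bool) : Prop :=
  exists v, writes E j o v.

Definition before (S : list nat) (i j : nat) : Prop :=
  exists p q, p < q /\ nth_error S p = Some i /\ nth_error S q = Some j.

(* K = committed transactions (all completed ones, possibly some pending ones);
   co = causal order (transitive, contains process order and reads-from);
   for each client a serialization of the committed transactions respecting
   co in which that client's transactions read legally. *)
Definition causally_consistent V (I : impl V) (E : list (ev I)) : Prop :=
  exists (K : nat -> Prop) (co : nat -> nat -> Prop),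
    (forall i, K i -> exists c T, nth_error E i = Some (EInv c T)) /\
    (forall i r, completes E i r -> K i) /\
    (forall i j k, co i j -> co j k -> co i k) /\
    (forall i j c T T', K i -> K j -> i < j ->
        nth_error E i = Some (EInv c T) -> nth_error E j = Some (EInv c T') -> co i j) /\
    (forall i c T r o v, K i -> nth_error E i = Some (EInv c T) -> completes E i r ->
        rdo T o = true -> resp_at r o = Some v ->
        exists j, K j /\ j <> i /\ writes E j o v /\ co j i) /\
    (forall c, exists S : list nat,
        NoDup S /\ (forall i, In i S <-> K i) /\
        (forall i j, K i -> K j -> co i j -> before S i j) /\
        (forall i T r o, nth_error E i = Some (EInv c T) -> completes E i r ->
           rdo T o = true ->
           exists v j, resp_at r o = Some v /\ before S j i /\ writes E j o v /\
             forall k, before S j k -> before S k i -> ~ writes_obj E k o)).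

Definition wf_impl V (I : impl V) : Prop :=
  forall p s rcv s' sends out, stp I p s rcv = (s', sends, out) ->
    NoDup (map fst sends) /\ ~ In p (map fst sends) /\
    (forall c q, p = Cli c -> In q (map fst sends) -> exists o, q = Srv o).

Fixpoint nsent V (I : impl V) (s c : proc) (E : list (ev I)) : nat :=
  match E with
  | [] => 0
  | EStep p _ sends _ :: E' =>
      (if proc_eq_dec p s then
         if in_dec proc_eq_dec c (map fst sends) then 1 else 0 else 0) + nsent s c E'
  | _ :: E' => nsent s c E'
  end.

Fixpoint nread V (I : impl V) (s c : proc) (E : list (ev I)) : nat :=
  match E with
  | [] => 0
  | EStep p rcv _ _ :: E' =>
      (if proc_eq_dec p s then count_occ proc_eq_dec (map fst rcv) c else 0)
      + nread s c E'
  | _ :: E' => nread s c E'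
  end.

(* servers send to a client only responses to its requests: each step in
   which a server sends to client c answers a distinct request of c read so far *)
Definition srv_only_responds V (I : impl V) (E : list (ev I)) : Prop :=
  forall k o rcv sends out c, nth_error E k = Some (EStep (Srv o) rcv sends out) ->
    In (Cli c) (map fst sends) ->
    nsent (Srv o) (Cli c) (firstn (S k) E) <= nread (Srv o) (Cli c) (firstn (S k) E).

Definition fast_rot V (I : impl V) (E : list (ev I)) : Prop :=
  forall i c T, nth_error E i = Some (EInv c T) -> read_only T ->
  (forall k1 k2 rcv1 s1 o1 rcv2 s2 o2,
      in_window E c i k1 -> in_window E c i k2 ->
      nth_error E k1 = Some (EStep (Cli c) rcv1 s1 o1) ->
      nth_error E k2 = Some (EStep (Cli c) rcv2 s2 o2) ->
      s1 <> [] -> s2 <> [] -> k1 = k2) /\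
  (forall o k1 k2 rcv1 s1 o1 rcv2 s2 o2,
      in_window E c i k1 -> in_window E c i k2 ->
      nth_error E k1 = Some (EStep (Srv o) rcv1 s1 o1) ->
      nth_error E k2 = Some (EStep (Srv o) rcv2 s2 o2) ->
      In (Cli c) (map fst s1) -> In (Cli c) (map fst s2) -> k1 = k2) /\
  (forall o k rcv s out,
      in_window E c i k -> nth_error E k = Some (EStep (Srv o) rcv s out) ->
      In (Cli c) (map fst rcv) -> In (Cli c) (map fst s)) /\
  (forall r o v, completes E i r -> rdo T o = true -> resp_at r o = Some v ->
      exists k rcv s out m, in_window E c i k /\
        nth_error E k = Some (EStep (Cli c) rcv s out) /\
        In (Srv o, m) rcv /\ mval I m = Some v).

Definition one_version V (I : impl V) (E : list (ev I)) : Prop :=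
  forall k o rcv sends out c m v,
    nth_error E k = Some (EStep (Srv o) rcv sends out) -> In (Cli c, m) sends ->
    mval I m = Some v -> exists j, j < k /\ writes E j o v.

(* x written to X_o is visible in C: every legal execution from C containing
   just one read-only transaction, reading X_o, by a client not in
   {cx, c0in, c1in}, returns x for X_o.  (Legal: every sent message is
   eventually received, i.e. nothing is left in transit.) *)
Definition visible V (I : impl V) (c0in c1in cx : nat) (o : bool) (x : V)
  (C : config I) : Prop :=
  forall E (C' : config I) i c T r,
    exec C E C' -> transit C' = [] ->
    inv_list E = [(c, T)] -> read_only T -> rdo T o = true ->
    c <> cx -> c <> c0in -> c <> c1in ->
    nth_error E i = Some (EInv c T) -> completes E i r ->
    resp_at r o = Some x.

Definition solo_ev V (I : impl V) (c : nat) (e : ev I) : Prop :=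
  match e with
  | EInv _ _ => False
  | EStep (Cli d) _ _ _ => d = c
  | _ => True
  end.

Definition min_progress V (I : impl V) (c0in c1in : nat) : Prop :=
  forall E (C : config I) c T,
    exec (init_config I) E C -> quiescent C -> write_only T ->
    exists E' (C' : config I),
      exec C (EInv c T :: E') C' /\ (forall e, In e E' -> solo_ev c e) /\
      forall o x, wro T o = Some x -> visible c0in c1in c o x C'.

From Stdlib Require Import List Permutation Lia.
Import ListNotations.

(* Splice alpha, beta and tau into one execution.  Suppose T_r reads X_1 from
   T_w, so T_w is causally before T_r, but returns x_0^in for X_0.  The initial
   write of X_0 was read by T_r^in, which precedes T_w in c_w's process order,
   so that write is causally before T_w.  Hence in c_r's serialization T_w, which
   also writes X_0, lies between the initial write of X_0 and T_r, and T_r cannot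
   legally return x_0^in.  Up to the symmetric case, T_r therefore returns either
   both initial values or both values of T_w. *)

Lemma exec_app {V} {I : impl V} {C C1 C2 : config I} {E1 E2} :
  exec C E1 C1 -> exec C1 E2 C2 -> exec C (E1 ++ E2) C2.
Proof. induction 1; intros; simpl; eauto using exec. Qed.

Lemma inv_list_app {V} {I : impl V} (E1 E2 : list (ev I)) :
  inv_list (E1 ++ E2) = inv_list E1 ++ inv_list E2.
Proof.
  induction E1 as [|e E1 IH]; simpl; [reflexivity|].
  destruct e; simpl; rewrite IH; reflexivity.
Qed.

Lemma In_inv_list {V} {I : impl V} (E : list (ev I)) c T :
  In (c, T) (inv_list E) <-> exists k, nth_error E k = Some (EInv c T).
Proof.
  induction E as [|e E IH]; simpl.
  - split; [contradiction|]. intros [[|k] Hk]; discriminate.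
  - split.
    + intros Hin.
      assert (Htail : In (c, T) (inv_list E) -> exists k, nth_error (e :: E) k = Some (EInv c T))
        by (intros Hin'; destruct (proj1 IH Hin') as [k Hk]; exists (S k); exact Hk).
      destruct e; auto.
      destruct Hin as [Heq | Hin]; auto.
      injection Heq as -> ->; exists 0; reflexivity.
    + intros [[|k] Hk]; simpl in Hk.
      * injection Hk as ->; simpl; auto.
      * assert (Hin : In (c, T) (inv_list E)) by (apply IH; eauto).
        destruct e; simpl; auto.
Qed.

Lemma inv_index_unique {V} {I : impl V} {E : list (ev I)} {j j' c T} :
  NoDup (inv_list E) -> nth_error E j = Some (EInv c T) ->
  nth_error E j' = Some (EInv c T) -> j = j'.
Proof.
  revert j j'; induction E as [|e E IH]; intros [|j] [|j'] Hnd Hj Hj'; simpl in *;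
    try discriminate; try reflexivity.
  - injection Hj as ->; inversion Hnd as [|? ? Hnotin]; subst.
    exfalso; apply Hnotin, In_inv_list; eauto.
  - injection Hj' as ->; inversion Hnd as [|? ? Hnotin]; subst.
    exfalso; apply Hnotin, In_inv_list; eauto.
  - f_equal; apply IH; auto.
    destruct e; simpl in Hnd; auto. now inversion Hnd.
Qed.

Lemma completes_app_r {V} {I : impl V} {E : list (ev I)} (E' : list (ev I)) {i r} :
  completes E i r -> completes (E ++ E') i r.
Proof.
  intros [j [c [T [Hi [Hij [Hj Hgap]]]]]].
  assert (Hjlen : j < length E)
    by (apply nth_error_Some; destruct (nth_error E j); [discriminate | contradiction]).
  exists j, c, T; rewrite !nth_error_app1 by lia.
  repeat split; auto.
  intros k Hk; rewrite nth_error_app1 by lia; apply Hgap, Hk.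
Qed.

Lemma nth_error_app_shift A (E' E : list A) k :
  nth_error (E' ++ E) (length E' + k) = nth_error E k.
Proof. rewrite nth_error_app2 by lia. f_equal; lia. Qed.

Lemma completes_app_l {V} {I : impl V} (E' : list (ev I)) {E i r} :
  completes E i r -> completes (E' ++ E) (length E' + i) r.
Proof.
  intros [j [c [T [Hi [Hij [Hj Hgap]]]]]].
  exists (length E' + j), c, T; rewrite !nth_error_app_shift.
  repeat split; auto; try lia.
  intros k Hk; replace k with (length E' + (k - length E')) by lia.
  rewrite nth_error_app_shift; apply Hgap; lia.
Qed.

Lemma Trd_reads {V} o : rdo (@Trd V) o = true.
Proof. now destruct o. Qed.

Lemma before_irrefl (S : list nat) i : NoDup S -> ~ before S i i.
Proof.
  intros Hnd [p [q [Hpq [Hp Hq]]]].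
  assert (p = q) by (apply (proj1 (NoDup_nth_error S) Hnd);
                      [apply nth_error_Some; congruence | congruence]).
  lia.
Qed.

Section AtomicRead.

Variables (V : Type) (I : impl V) (E : list (ev I)).
Variables (K : nat -> Prop) (co : nat -> nat -> Prop) (S : list nat).

Hypothesis completes_K : forall i r, completes E i r -> K i.
Hypothesis co_trans : forall i j k, co i j -> co j k -> co i k.
Hypothesis co_po : forall i j c T T', K i -> K j -> i < j ->
  nth_error E i = Some (EInv c T) -> nth_error E j = Some (EInv c T') -> co i j.
Hypothesis co_rf : forall i c T r o v, K i -> nth_error E i = Some (EInv c T) ->
  completes E i r -> rdo T o = true -> resp_at r o = Some v ->
  exists j, K j /\ j <> i /\ writes E j o v /\ co j i.
Hypothesis S_nodup : NoDup S.
Hypothesis S_co : forall i j, K i -> K j -> co i j -> before S i j.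

(* Objects are indexed by [bool] (false = X_0): [kin o] is the initial write of
   X_o, of value [xin o]; [iRin], [iW], [iR] are T_r^in, T_w (writing [xw o]) and
   T_r.  [S] is c_r's serialization. *)
Variables (xin xw : bool -> V) (kin : bool -> nat) (cw cr iRin iW iR : nat) (r : resp V).

Hypothesis S_legal : forall i T r o, nth_error E i = Some (EInv cr T) ->
  completes E i r -> rdo T o = true ->
  exists v j, resp_at r o = Some v /\ before S j i /\ writes E j o v /\
    forall k, before S j k -> before S k i -> ~ writes_obj E k o.

Hypothesis Rin_inv : nth_error E iRin = Some (EInv cw Trd).
Hypothesis Rin_completes : completes E iRin (Some (xin false), Some (xin true)).
Hypothesis W_inv : nth_error E iW = Some (EInv cw (Tw (xw false) (xw true))).
Hypothesis Rin_before_W : iRin < iW.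
Hypothesis R_inv : nth_error E iR = Some (EInv cr Trd).
Hypothesis R_completes : completes E iR r.
Hypothesis writers : forall j o v, writes E j o v ->
  (j = kin o /\ v = xin o) \/ (j = iW /\ v = xw o).

Lemma co_irrefl i : K i -> ~ co i i.
Proof. intros Ki Hco; exact (before_irrefl S i S_nodup (S_co i i Ki Ki Hco)). Qed.

Lemma W_writes o : writes_obj E iW o.
Proof. exists (xw o), cw, (Tw (xw false) (xw true)); split; [exact W_inv | now destruct o]. Qed.

Lemma initial_write_before_W o : K iW -> K (kin o) /\ co (kin o) iW.
Proof.
  intros KW.
  assert (KRin : K iRin) by eauto.
  assert (Hpo : co iRin iW) by eauto.
  assert (Hval : resp_at (Some (xin false), Some (xin true)) o = Some (xin o))
    by now destruct o.
  destruct (co_rf _ _ _ _ o _ KRin Rin_inv Rin_completes (Trd_reads o) Hval)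
    as [j [Kj [_ [Hwj Hcoj]]]].
  destruct (writers _ _ _ Hwj) as [[-> _] | [-> _]]; [split; eauto |].
  (* T_r^in cannot read from T_w, which follows it in process order. *)
  exfalso; apply (co_irrefl iW KW); eauto.
Qed.

Lemma read_value o :
  resp_at r o = Some (xw o) \/
  (resp_at r o = Some (xin o) /\ resp_at r (negb o) = Some (xin (negb o))).
Proof.
  assert (KR : K iR) by eauto.
  destruct (S_legal _ _ _ o R_inv R_completes (Trd_reads _))
    as [v [j [Hv [_ [Hwj Hgap]]]]].
  destruct (writers _ _ _ Hwj) as [[-> ->] | [-> ->]]; [right | left; exact Hv].
  split; [exact Hv |].
  destruct (S_legal _ _ _ (negb o) R_inv R_completes (Trd_reads _)) as [v' [_ [Hv' _]]].
  destruct (co_rf _ _ _ _ (negb o) _ KR R_inv R_completes (Trd_reads _) Hv')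
    as [j' [Kj' [_ [Hwj' Hcoj']]]].
  destruct (writers _ _ _ Hwj') as [[_ ->] | [-> _]]; [exact Hv' | exfalso].
  destruct (initial_write_before_W o Kj') as [Kin Hco].
  apply (Hgap iW); [apply S_co | apply S_co | apply W_writes]; auto.
Qed.

Lemma read_atomic :
  (resp_at r false = Some (xw false) /\ resp_at r true = Some (xw true)) \/
  (resp_at r false = Some (xin false) /\ resp_at r true = Some (xin true)).
Proof.
  destruct (read_value false) as [H0 | [H0 H1]]; [| right; auto].
  destruct (read_value true) as [H1 | [H1 H0']]; [left | right]; auto.
Qed.

End AtomicRead.

Lemma inv_index_of_perm {V} {I : impl V} {E : list (ev I)} {L c T} :
  Permutation (inv_list E) L -> In (c, T) L -> exists k, nth_error E k = Some (EInv c T).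
Proof.
  intros Hperm HcT; apply In_inv_list.
  eapply Permutation_in; [apply Permutation_sym, Hperm | exact HcT].
Qed.

Lemma five_txn_writers {V} {I : impl V} (E : list (ev I)) {c0 c1 cw cr : nat}
    {x0in x1in x0 x1 : V} {k0 k1 kW : nat} :
  c0 <> c1 -> cw <> c0 -> cw <> c1 -> cr <> cw ->
  Permutation (inv_list E)
    [(c0, Tw0 x0in); (c1, Tw1 x1in); (cw, Trd); (cw, Tw x0 x1); (cr, Trd)] ->
  nth_error E k0 = Some (EInv c0 (Tw0 x0in)) ->
  nth_error E k1 = Some (EInv c1 (Tw1 x1in)) ->
  nth_error E kW = Some (EInv cw (Tw x0 x1)) ->
  forall j o v, writes E j o v ->
    (j = (if o then k1 else k0) /\ v = (if o then x1in else x0in)) \/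
    (j = kW /\ v = (if o then x1 else x0)).
Proof.
  intros H01 Hw0 Hw1 Hrw Hperm Hk0 Hk1 HkW j o v [c [T [Hj Hwo]]].
  assert (Hnd : NoDup (inv_list E)).
  { apply (Permutation_NoDup (Permutation_sym Hperm)).
    repeat constructor; simpl; intros H; repeat destruct H as [H | H];
      try contradiction; inversion H; congruence. }
  assert (HcT : In (c, T) (inv_list E)) by (apply In_inv_list; eauto).
  apply (Permutation_in _ Hperm) in HcT.
  simpl in HcT; repeat destruct HcT as [HcT | HcT]; try contradiction;
    inversion HcT; subst; destruct o; simpl in Hwo; inversion Hwo; subst;
    [left | left | right | right]; split; auto; eapply inv_index_unique; eauto.
Qed.

Theorem lemma1 (V : Type) (I : impl V)
  (c0in c1in cw : nat)
  (Hc01 : c0in <> c1in) (Hw0 : cw <> c0in) (Hw1 : cw <> c1in)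
  (* system model *)
  (Hwf : wf_impl I)
  (Hsrv : forall E (C : config I), exec (init_config I) E C -> srv_only_responds E)
  (* Pi is causally consistent *)
  (Hcc : forall E (C : config I), exec (init_config I) E C -> causally_consistent E)
  (* fast read-only transactions *)
  (Hfast : forall E (C : config I), exec (init_config I) E C -> fast_rot E /\ one_version E)
  (* minimal progress for write-only transactions *)
  (Hprog : min_progress I c0in c1in)
  (* Q0 *)
  (x0in x1in : V) (alpha : list (ev I)) (Q0 : config I)
  (Halpha : exec (init_config I) alpha Q0)
  (HalphaT : Permutation (inv_list alpha) [(c0in, Tw0 x0in); (c1in, Tw1 x1in)])
  (HQ0 : quiescent Q0)
  (Hvis0 : visible c0in c1in cw false x0in Q0)
  (Hvis1 : visible c0in c1in cw true x1in Q0)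
  (* C0 *)
  (beta : list (ev I)) (C0 : config I)
  (Hbeta : exec Q0 beta C0)
  (HbetaT : inv_list beta = [(cw, Trd)])
  (Hbeta_ret : exists i0, nth_error beta i0 = Some (EInv cw Trd) /\
                          completes beta i0 (Some x0in, Some x1in))
  (HC0 : transit C0 = [])
  (* the execution tau *)
  (x0 x1 : V) (cr : nat) (Hcr : cr <> cw)
  (tau : list (ev I)) (C' : config I)
  (Htau : exec C0 tau C') (Hlegal : transit C' = [])
  (HtauT : Permutation (inv_list tau) [(cw, Tw x0 x1); (cr, Trd)])
  (i : nat) (r : resp V)
  (Hi : nth_error tau i = Some (EInv cr Trd)) (Hr : completes tau i r) :
  (resp_at r false = Some x0 /\ resp_at r true = Some x1) \/
  (resp_at r false = Some x0in /\ resp_at r true = Some x1in).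
Proof.
  set (E := (alpha ++ beta) ++ tau).
  assert (HE : exec (init_config I) E C') by (unfold E; eauto using exec_app).
  assert (Hperm : Permutation (inv_list E)
            [(c0in, Tw0 x0in); (c1in, Tw1 x1in); (cw, Trd); (cw, Tw x0 x1); (cr, Trd)])
    by (unfold E; rewrite !inv_list_app, HbetaT;
        exact (Permutation_app (Permutation_app HalphaT (Permutation_refl _)) HtauT)).
  destruct (inv_index_of_perm (c := c0in) (T := Tw0 x0in) Hperm) as [k0 Hk0]; [simpl; auto |].
  destruct (inv_index_of_perm (c := c1in) (T := Tw1 x1in) Hperm) as [k1 Hk1]; [simpl; auto |].
  destruct (inv_index_of_perm (c := cw) (T := Tw x0 x1) HtauT) as [kW HkW]; [simpl; auto |].
  destruct Hbeta_ret as [i0 [Hi0 Hci0]].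
  assert (i0 < length beta) by (apply nth_error_Some; congruence).
  assert (HkWE : nth_error E (length (alpha ++ beta) + kW) = Some (EInv cw (Tw x0 x1)))
    by (unfold E; rewrite nth_error_app_shift; exact HkW).
  destruct (Hcc _ _ HE) as [K [co [_ [HK [Htrans [Hpo [Hrf HS]]]]]]].
  destruct (HS cr) as [S [HSnd [_ [HSco Hleg]]]].
  apply (@read_atomic V I E K co S HK Htrans Hpo Hrf HSnd HSco
           (fun o => if o then x1in else x0in) (fun o => if o then x1 else x0)
           (fun o => if o then k1 else k0) cw cr (length alpha + i0)
           (length (alpha ++ beta) + kW) (length (alpha ++ beta) + i) r Hleg).
  - unfold E; rewrite <- app_assoc, nth_error_app_shift, nth_error_app1; auto.
  - unfold E; rewrite <- app_assoc; apply completes_app_l, completes_app_r, Hci0.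
  - exact HkWE.
  - rewrite length_app; lia.
  - unfold E; rewrite nth_error_app_shift; exact Hi.
  - apply completes_app_l, Hr.
  - exact (five_txn_writers E Hc01 Hw0 Hw1 Hcr Hperm Hk0 Hk1 HkWE).
Qed.
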